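(* Let $n\ge 1$ and let $p$ be a probability distribution on $\{0,1\}^n$ with $p(x)>0$ for all $x$. For nonempty subsets $I,J\subseteq\{1,\dots,n\}$, the Fisher information between the coordinates $\eta_I$ and $\eta_J$ at $p$ is $$g^{IJ}(\eta)=\sum_{K\subseteq I\cap J}(-1)^{|I-K|+|J-K|}\cdot\frac{1}{p_K},$$ where $|\cdot|$ denotes cardinality.
   Context: For $K\subseteq\{1,\dots,n\}$ (including $K=\emptyset$), $p_K$ denotes $p(x)$ at the point $x$ with $x_i=1$ for $i\in K$ and $x_i=0$ for $i\notin K$. For $I\neq\emptyset$, $X_I(x)=\prod_{i\in I}x_i$ and the $\eta$-coordinates are $\eta_I=E_p[X_I]$; $(\eta_I)_{I\neq\emptyset}$ is a coordinate system on the manifold of strictly positive distributions on $\{0,1\}^n$. For a coordinate system $\xi$, the Fisher information is $g_{ij}=E_p\big[\frac{\partial\log p(x;\xi)}{\partial\xi_i}\frac{\partial\log p(x;\xi)}{\partial\xi_j}\big]$. *)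

From HB Require Import structures.
From mathcomp Require Import all_boot all_order all_algebra.
From mathcomp Require Import all_classical all_reals all_analysis.
Set Implicit Arguments. Unset Strict Implicit. Unset Printing Implicit Defensive.
Import Order.TTheory GRing.Theory Num.Theory.
Local Open Scope ring_scope.

Section Defs.
Variable R : realType.
Variable n : nat.

(* points of {0,1}^n, coordinates indexed by 'I_n = {0,...,n-1} *)
Definition bpoint := {ffun 'I_n -> bool}.

Definition XI (I : {set 'I_n}) (x : bpoint) : R := \prod_(i in I) (x i)%:R.

Definition etac (p : bpoint -> R) (I : {set 'I_n}) : R := \sum_(x : bpoint) p x * XI I x.

Definition is_pos_distr (p : bpoint -> R) : Prop :=
  (forall x, 0 < p x) /\ \sum_(x : bpoint) p x = 1.

Definition pt_of (K : {set 'I_n}) : bpoint := [ffun i => i \in K].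

(* d/d eta_I of log p(x; eta) at eta = eta(p), where pe is the inverse of the
   eta-chart (eta |-> distribution) *)
Definition score (pe : ({set 'I_n} -> R) -> bpoint -> R) (p : bpoint -> R)
  (I : {set 'I_n}) (x : bpoint) : R :=
  derive1 (fun t : R => ln (pe (fun L => etac p L + (if L == I then t else 0)) x)) 0.

Definition fisher (pe : ({set 'I_n} -> R) -> bpoint -> R) (p : bpoint -> R)
  (I J : {set 'I_n}) : R :=
  \sum_(x : bpoint) p x * (score pe p I x * score pe p J x).

End Defs.

(* Moving from p along the eta-coordinate eta_I alone (I nonempty) is the
   affine path q_t = p + t c_I, where c_I(x) = (-1)^|I - K| if the support K of
   x lies in I and 0 otherwise: by Moebius inversion on the subset lattice,
   E_{c_I}[X_L] = [L = I], and for L = {} this says q_t stays a probability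
   distribution.  Hence the score along eta_I is c_I(x)/p(x), and the Fisher
   information is sum_x c_I(x) c_J(x) / p(x), which is the stated sum. *)
From HB Require Import structures.
From mathcomp Require Import all_boot all_order all_algebra.
From mathcomp Require Import all_classical all_reals all_analysis.
From mathcomp Require Import ring lra.
Import Order.TTheory GRing.Theory Num.Theory.
Import mathcomp.boot.fintype mathcomp.boot.finset.
Import numFieldNormedType.Exports.
Set Implicit Arguments. Unset Strict Implicit. Unset Printing Implicit Defensive.
Local Open Scope ring_scope.

Section MoebiusCoefficient.
Variables (T : finType) (R : numDomainType).
Implicit Types (I K L : {set T}) (a : T).

Definition moebius_coef I K : R := if K \subset I then (-1) ^+ #|I :\: K| else 0.

Definition toggle a K := if a \in K then K :\ a else a |: K.

Lemma toggleK a : involutive (toggle a).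
Proof.
move=> K; rewrite /toggle; case aK: (a \in K).
  by rewrite setD11 setD1K.
by rewrite setU11 setU1K ?aK.
Qed.

Lemma moebius_coef_toggle I K a :
  a \in I -> moebius_coef I (toggle a K) = - moebius_coef I K.
Proof.
move=> aI; rewrite /moebius_coef /toggle; case aK: (a \in K).
  have -> : (K :\ a \subset I) = (K \subset I).
    apply/idP/idP => sKI; last by apply: subset_trans sKI; exact: subD1set.
    by rewrite -(setD1K aK) subUset sub1set aI sKI.
  case: ifP => // _; last by rewrite oppr0.
  have -> : I :\: (K :\ a) = a |: (I :\: K).
    by apply/setP => i; rewrite !inE; case: eqVneq => [->|] //=; rewrite aK aI.
  by rewrite cardsU1 !inE aK /= exprS mulN1r.
rewrite subUset sub1set aI /=; case: ifP => // _; last by rewrite oppr0.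
have -> : I :\: K = a |: (I :\: (a |: K)).
  by apply/setP => i; rewrite !inE; case: eqVneq => [->|] //=; rewrite aK aI.
by rewrite cardsU1 !inE eqxx /= exprS mulN1r opprK.
Qed.

Lemma subset_toggle L K a : a \notin L -> (L \subset toggle a K) = (L \subset K).
Proof.
rewrite /toggle => aL; case: ifPn => aK; first by rewrite subsetD1 aL andbT.
by have := subsetD1 L (a |: K) a; rewrite setU1K // aL andbT.
Qed.

(* Toggling an element of I :\: L is a sign-reversing involution on the
   supersets of L, so the sum vanishes unless L = I. *)
Lemma sum_moebius_coef_supsets L I :
  \sum_(K : {set T} | L \subset K) moebius_coef I K = (L == I)%:R.
Proof.
case: (eqVneq L I) => [->|neqLI].
  rewrite (bigD1 I) //= big1 ?addr0; first by rewrite /moebius_coef subxx setDv cards0.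
  move=> K /andP[sIK neqKI]; rewrite /moebius_coef; case: ifP => // sKI.
  by rewrite eqEsubset sKI sIK in neqKI.
have [sLI|nsLI] := boolP (L \subset I); last first.
  apply: big1 => K sLK; rewrite /moebius_coef; case: ifP => // sKI.
  by rewrite (subset_trans sLK sKI) in nsLI.
have /properP[_ [a aI aL]] : L \proper I by rewrite properEneq neqLI.
set S := \sum_(K | _) _.
have S_opp : S = - S.
  rewrite /S -sumrN (reindex_inj (inv_inj (toggleK a))) /=.
  by apply: eq_big => [K|K _]; [exact: subset_toggle | exact: moebius_coef_toggle].
have : S *+ 2 == 0 by rewrite mulr2n {1}S_opp addNr.
by rewrite mulrn_eq0 /= => /eqP ->.
Qed.

Lemma norm_moebius_coef_le1 I K : `|moebius_coef I K| <= 1.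
Proof. by rewrite /moebius_coef; case: ifP; rewrite ?normr0 // normrX normrN1 expr1n. Qed.

End MoebiusCoefficient.

Section EtaCoordinates.
Variables (R : realType) (n : nat).
Implicit Types (p : bpoint n -> R) (I K L : {set 'I_n}) (x : bpoint n).

Definition support_of x : {set 'I_n} := [set i | x i].

Lemma pt_of_support x : pt_of (support_of x) = x.
Proof. by apply/ffunP => i; rewrite ffunE inE. Qed.

Lemma support_pt_of K : support_of (pt_of K) = K.
Proof. by apply/setP => i; rewrite inE ffunE. Qed.

Lemma sum_bpoint (F : bpoint n -> R) :
  \sum_x F x = \sum_(K : {set 'I_n}) F (pt_of K).
Proof.
by rewrite (reindex (@pt_of n)) //; exists support_of => x _;
  rewrite ?support_pt_of ?pt_of_support.
Qed.

Lemma XI_pt_of L K : XI R L (pt_of K) = (L \subset K)%:R.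
Proof.
rewrite /XI; have [sLK|/subsetPn[i iL iK]] := boolP (L \subset K).
  by rewrite big1 // => i iL; rewrite ffunE (subsetP sLK).
by rewrite (bigD1 i) //= ffunE (negbTE iK) mul0r.
Qed.

Lemma etac_set0 p : etac p set0 = \sum_x p x.
Proof. by apply: eq_bigr => x _; rewrite /XI big_set0 mulr1. Qed.

Lemma moebius_inversion_XI I L :
  \sum_x moebius_coef R I (support_of x) * XI R L x = (L == I)%:R.
Proof.
rewrite sum_bpoint -sum_moebius_coef_supsets [RHS]big_mkcond /=.
by apply: eq_bigr => K _; rewrite support_pt_of XI_pt_of; case: (L \subset K);
  rewrite ?mulr1 ?mulr0.
Qed.

Lemma etac_moebius_shift p I t L :
  etac (fun x => p x + t * moebius_coef R I (support_of x)) L =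
  etac p L + (if L == I then t else 0).
Proof.
rewrite /etac; under eq_bigr do rewrite mulrDl; rewrite big_split /=; congr (_ + _).
under eq_bigr do rewrite -mulrA; rewrite -mulr_sumr moebius_inversion_XI.
by case: (L == I); rewrite ?mulr1 ?mulr0.
Qed.

Lemma moebius_shift_pos_distr p I : is_pos_distr p -> I != set0 ->
  \forall t \near 0, is_pos_distr (fun x => p x + t * moebius_coef R I (support_of x)).
Proof.
move=> [p_gt0 p_sum] I_neq0.
have small : \forall t \near nbhs (0 : R), forall x, `|t| < p x.
  exact: filter_forall (fun x => nbhs0_lt (p_gt0 x)).
apply: filterS small => t small; split; last first.
  by rewrite -etac_set0 etac_moebius_shift eq_sym (negbTE I_neq0) addr0 etac_set0.
move=> x; have: `|t * moebius_coef R I (support_of x)| < p x.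
  rewrite normrM (le_lt_trans _ (small x)) //.
  by rewrite ler_piMr ?norm_moebius_coef_le1.
by rewrite ltr_norml => /andP[+ _]; lra.
Qed.

End EtaCoordinates.

Lemma is_derive_affine (R : realType) (a c x : R) :
  is_derive x (1 : R) (fun t : R => a + t * c) c.
Proof.
have -> : (fun t : R => a + t * c) = cst a + c \*: id.
  by apply/funext => t /=; rewrite mulrC.
apply: is_derive_eq (is_deriveD (is_derive_cst a _ _) (is_deriveZ c (is_derive_id _ _))) _.
by rewrite add0r /GRing.scale /= mulr1.
Qed.

Lemma derive_ln_affine (R : realType) (a c : R) : 0 < a ->
  'D_1 (fun t : R => ln (a + t * c)) 0 = c / a.
Proof.
move=> a_gt0; have affine := is_derive_affine a c 0; have ln_a := is_derive1_ln a_gt0.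
rewrite -derive1E.
change (((@ln R) \o (fun t : R => a + t * c))^`()%classic 0 = c / a).
rewrite derive1_comp /= ?mul0r ?addr0; last 2 first.
- exact: @ex_derive _ _ _ _ _ _ _ affine.
- exact: @ex_derive _ _ _ _ _ _ _ ln_a.
by rewrite !derive1E (@derive_val _ _ _ _ _ _ _ ln_a) (@derive_val _ _ _ _ _ _ _ affine) mulrC.
Qed.

Lemma score_eta (R : realType) (n : nat)
  (p : bpoint n -> R) (hp : is_pos_distr p)
  (pe : ({set 'I_n} -> R) -> bpoint n -> R)
  (hpe : forall q : bpoint n -> R, is_pos_distr q -> forall x, pe (etac q) x = q x)
  (I : {set 'I_n}) (I_neq0 : I != set0) (x : bpoint n) :
  score pe p I x = moebius_coef R I (support_of x) / p x.
Proof.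
rewrite /score derive1E -derive_ln_affine; last exact: hp.1.
apply: near_eq_derive; near=> t.
have /funext <- := etac_moebius_shift p I t.
by rewrite hpe //; near: t; exact: moebius_shift_pos_distr.
Unshelve. all: by end_near.
Qed.

Theorem proposition2 (R : realType) (n : nat) (hn : (1 <= n)%N)
  (p : bpoint n -> R) (hp : is_pos_distr p)
  (pe : ({set 'I_n} -> R) -> bpoint n -> R)
  (hpe : forall q : bpoint n -> R, is_pos_distr q ->
           forall x, pe (etac q) x = q x)
  (I J : {set 'I_n}) (hI : I != finset.set0) (hJ : J != finset.set0) :
  fisher pe p I J =
  \sum_(K : {set 'I_n} | K \subset I :&: J)
     (-1) ^+ (#|I :\: K| + #|J :\: K|) / p (pt_of K).
Proof.
rewrite /fisher.
under eq_bigr do rewrite (score_eta hp hpe hI) (score_eta hp hpe hJ).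
rewrite sum_bpoint [RHS]big_mkcond /=; apply: eq_bigr => K _.
have pK_gt0 := hp.1 (pt_of K).
rewrite support_pt_of subsetI /moebius_coef.
case: (K \subset I); case: (K \subset J); rewrite /= ?mul0r ?mulr0 // exprD.
by field; rewrite gt_eqF.
Qed.
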